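(* In $\mathbb{C}^3\otimes\mathbb{C}^2\otimes\mathbb{C}^2$ there are exactly two SLOCC equivalence classes of SLOCC maximal states, represented by $|\Phi_1\rangle=|0\rangle|00\rangle+|1\rangle|01\rangle+|2\rangle|11\rangle$ and $|\Phi_2\rangle=|0\rangle|00\rangle+|1\rangle(|01\rangle+|10\rangle)+|2\rangle|11\rangle$, where the first ket is in $\mathbb{C}^3$ and the two-qubit ket is in $\mathbb{C}^2\otimes\mathbb{C}^2$.
   Context: $|\psi\rangle\le_{\mathrm{SLOCC}}|\phi\rangle$ means $(L_1\otimes L_2\otimes L_3)|\phi\rangle=|\psi\rangle$ for some linear operators $L_i$ on the respective factors; SLOCC equivalence means mutual $\le_{\mathrm{SLOCC}}$ (equivalently relation by invertible local operators). A state $|\phi\rangle$ is SLOCC maximal if for every $|\psi\rangle$ in the space, $|\phi\rangle\le_{\mathrm{SLOCC}}|\psi\rangle$ implies $|\psi\rangle\le_{\mathrm{SLOCC}}|\phi\rangle$. $\{|0\rangle,|1\rangle,\dots\}$ denote standard orthonormal bases. *)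

From HB Require Import structures.
From mathcomp Require Import all_boot all_order all_algebra.
Set Implicit Arguments. Unset Strict Implicit. Unset Printing Implicit Defensive.
Import Order.TTheory GRing.Theory Num.Theory.
Local Open Scope ring_scope.

(* A state of C^3 (x) C^2 (x) C^2, written in the standard product basis:
   psi (i, j, k) is the coefficient of |i>|j k>. *)
Definition state (C : numClosedFieldType) := {ffun 'I_3 * 'I_2 * 'I_2 -> C}.

(* (L1 (x) L2 (x) L3) psi, for arbitrary (not necessarily invertible) linear maps. *)
Definition apply_local (C : numClosedFieldType)
    (L1 : 'M[C]_3) (L2 L3 : 'M[C]_2) (psi : state C) : state C :=
  [ffun ijk : 'I_3 * 'I_2 * 'I_2 =>
     let: (i, j, k) := ijk in
     \sum_(a < 3) \sum_(b < 2) \sum_(c < 2)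
        L1 i a * L2 j b * L3 k c * psi (a, b, c)].

Definition slocc_le (C : numClosedFieldType) (psi phi : state C) : Prop :=
  exists (L1 : 'M[C]_3) (L2 L3 : 'M[C]_2), apply_local L1 L2 L3 phi = psi.

Definition slocc_equiv (C : numClosedFieldType) (psi phi : state C) : Prop :=
  slocc_le psi phi /\ slocc_le phi psi.

Definition slocc_maximal (C : numClosedFieldType) (phi : state C) : Prop :=
  forall psi : state C, slocc_le phi psi -> slocc_le psi phi.

Definition ket (C : numClosedFieldType) (i : 'I_3) (j k : 'I_2) : state C :=
  [ffun x => if x == (i, j, k) then 1 else 0].

Definition i3 (n : nat) : 'I_3 := inord n.
Definition i2 (n : nat) : 'I_2 := inord n.

Definition Phi1 (C : numClosedFieldType) : state C :=
  ket C (i3 0) (i2 0) (i2 0) + ket C (i3 1) (i2 0) (i2 1) + ket C (i3 2) (i2 1) (i2 1).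

Definition Phi2 (C : numClosedFieldType) : state C :=
  ket C (i3 0) (i2 0) (i2 0)
  + (ket C (i3 1) (i2 0) (i2 1) + ket C (i3 1) (i2 1) (i2 0))
  + ket C (i3 2) (i2 1) (i2 1).

From HB Require Import structures.
From mathcomp Require Import all_boot all_order all_algebra ring.

Set Implicit Arguments. Unset Strict Implicit. Unset Printing Implicit Defensive.
Import Order.TTheory GRing.Theory Num.Theory.
Local Open Scope ring_scope.

(* A state psi of C^3 (x) C^2 (x) C^2 is read as the triple of its slices, the
   2x2 matrices M_a = (psi (a, j, k))_(j,k), on which L1 (x) L2 (x) L3 acts by
   M_i |-> \sum_a L1 i a *: (L2 *m M_a *m L3^T).  The slices of Phi1 span the
   upper triangular matrices, those of Phi2 the symmetric matrices.

   The argument is organised around annihilators: matrices W with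
   <W, M_a> = tr (W^T M_a) = 0 for all slices M_a.
   - Every state has a nonzero annihilator (three slices in a 4-dimensional
     space).  If it is singular then W = A^T E10 B^T with A, B invertible, so
     every A M_a B is upper triangular and psi <= Phi1; if it is invertible
     then W = J B^T with J the symplectic matrix, every M_a B is symmetric and
     psi <= Phi2.  Hence every state lies below Phi1 or below Phi2.
   - Invertible local operators carry annihilators to annihilators through the
     congruence W |-> L2^-T W L3^-1, which preserves singularity.  Phi1 is
     annihilated only by singular matrices, Phi2 by no nonzero singular one;
     since any operator relating two states whose slices contain E00 and E11
     is invertible on the qubits, neither of Phi1, Phi2 lies below the other.
   The theorem is a formal consequence of these two facts. *)

Lemma matrix22P (T : Type) (A B : 'M[T]_2) :
  A 0 0 = B 0 0 -> A 0 1 = B 0 1 -> A 1 0 = B 1 0 -> A 1 1 = B 1 1 -> A = B.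
Proof.
have ord2 (k : 'I_2) : k = 0 \/ k = 1 by case: k => [[|[|//]] ?]; [left|right]; apply: val_inj.
by move=> e00 e01 e10 e11; apply/matrixP => i j; case: (ord2 i) (ord2 j) => -> [] ->.
Qed.

Lemma det_mx22 (R : comPzRingType) (A : 'M[R]_2) :
  \det A = A 0 0 * A 1 1 - A 0 1 * A 1 0.
Proof.
rewrite (expand_det_row _ 0) !big_ord_recr big_ord0 /= add0r /cofactor !det_mx11 !mxE /=.
rewrite expr0 expr1 mul1r mulN1r mulrN.
by congr (A _ _ * A _ _ - A _ _ * A _ _); apply: val_inj.
Qed.

Lemma sum_ord3 (V : nmodType) (F : 'I_3 -> V) : \sum_a F a = F 0 + F 1 + F 2.
Proof.
rewrite !big_ord_recr big_ord0 /= add0r.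
by congr (F _ + F _ + F _); apply: val_inj.
Qed.

Lemma triangular_decomposition (R : pzSemiRingType) (N : 'M[R]_2) : N 1 0 = 0 ->
  N = N 0 0 *: delta_mx 0 0 + N 0 1 *: delta_mx 0 1 + N 1 1 *: delta_mx 1 1.
Proof.
by move=> N10; apply: matrix22P; rewrite !mxE -!val_eqE /= ?N10 ?(mulr1, mulr0, addr0, add0r).
Qed.

Lemma symmetric_decomposition (R : pzSemiRingType) (N : 'M[R]_2) : N 0 1 = N 1 0 ->
  N = N 0 0 *: delta_mx 0 0 + N 0 1 *: (delta_mx 0 1 + delta_mx 1 0) + N 1 1 *: delta_mx 1 1.
Proof.
by move=> N01; apply: matrix22P; rewrite !mxE -!val_eqE /= ?N01 ?(mulr1, mulr0, addr0, add0r).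
Qed.

Lemma delta_diag_sum (R : pzSemiRingType) : delta_mx 0 0 + delta_mx 1 1 = 1 :> 'M[R]_2.
Proof. by apply: matrix22P; rewrite !mxE -!val_eqE /= ?addr0 ?add0r. Qed.

(* A nonzero singular 2x2 matrix is E10 up to invertible factors on both sides;
   the swap moves the unit entry of the rank-one normal form pid_mx 1 = E00. *)
Lemma pid1_swap (R : pzSemiRingType) : pid_mx 1 = tperm_mx 0 1 *m delta_mx 1 0 :> 'M[R]_2.
Proof. by apply: matrix22P; rewrite -xrowE !mxE ?perm.tpermL ?perm.tpermR -!val_eqE. Qed.

Lemma rank_one_factorization (F : fieldType) (W : 'M[F]_2) : W != 0 -> \det W = 0 ->
  exists A B : 'M[F]_2, [/\ A \in unitmx, B \in unitmx & W = A^T *m delta_mx 1 0 *m B^T].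
Proof.
move=> W0 detW.
have rankW : \rank W = 1%N.
  have : ~~ row_free W by rewrite row_free_unit unitmxE unitfE detW eqxx.
  rewrite /row_free -mxrank_eq0 in W0 *; move: (rank_leq_row W).
  by case: (\rank W) W0 => [|[|[|]]].
exists (col_ebase W *m tperm_mx 0 1)^T, (row_ebase W)^T; split.
- by rewrite unitmx_tr unitmx_mul col_ebase_unit unitmx_perm.
- by rewrite unitmx_tr row_ebase_unit.
by rewrite !trmxK -(mulmxA (col_ebase W)) -pid1_swap -{1}(mulmx_ebase W) rankW.
Qed.

Section Pairing.
Variables (R : comPzRingType) (n : nat).
Implicit Types W M : 'M[R]_n.

Definition pairing W M : R := \tr (W^T *m M).

Lemma pairingC W M : pairing W M = pairing M W.
Proof. by rewrite /pairing -mxtrace_tr trmx_mul trmxK. Qed.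

Lemma pairing_mulmx W (A M B : 'M[R]_n) :
  pairing W (A *m M *m B) = pairing (A^T *m W *m B^T) M.
Proof. by rewrite /pairing mulmxA mxtrace_mulC !trmx_mul !trmxK !mulmxA. Qed.

Lemma pairing_delta W j k : pairing W (delta_mx j k) = W j k.
Proof.
rewrite /pairing /mxtrace (bigD1 k) //= big1 ?addr0 => [|i /negbTE ik].
  rewrite mxE (bigD1 j) //= big1 ?addr0 => [|l /negbTE lj]; rewrite !mxE ?eqxx ?lj ?andbF ?mulr0 //.
  by rewrite mulr1.
by rewrite mxE big1 // => l _; rewrite !mxE ik andbF mulr0.
Qed.

Lemma pairingD W M1 M2 : pairing W (M1 + M2) = pairing W M1 + pairing W M2.
Proof. by rewrite /pairing mulmxDr raddfD. Qed.

Lemma pairingB W M1 M2 : pairing W (M1 - M2) = pairing W M1 - pairing W M2.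
Proof. by rewrite /pairing mulmxBr raddfB. Qed.

Lemma pairing_sum I (r : seq I) (c : I -> R) (M : I -> 'M[R]_n) W :
  pairing W (\sum_(i <- r) c i *: M i) = \sum_(i <- r) c i * pairing W (M i).
Proof.
by rewrite /pairing mulmx_sumr raddf_sum; apply: eq_bigr => i _; rewrite -scalemxAr /= mxtraceZ.
Qed.

Lemma pairing_mxvec W M : pairing W M = \sum_k mxvec W 0 k * mxvec M 0 k.
Proof.
rewrite (reindex _ (curry_mxvec_bij _ _)) /=.
transitivity (\sum_(p : 'I_n * 'I_n) W p.1 p.2 * M p.1 p.2); last first.
  by apply: eq_bigr => -[i j] _; rewrite /= !mxvecE.
rewrite -(pair_bigA _ (fun i j => W i j * M i j)) /pairing /mxtrace exchange_big /=.
by apply: eq_bigr => j _; rewrite mxE; apply: eq_bigr => i _; rewrite mxE.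
Qed.

End Pairing.

(* The symplectic matrix J = E01 - E10: <J, N> = 0 says that N is symmetric. *)
Definition symplectic_mx (R : pzRingType) : 'M[R]_2 := delta_mx 0 1 - delta_mx 1 0.

Lemma det_symplectic (R : comPzRingType) : \det (symplectic_mx R) = 1.
Proof. by rewrite det_mx22 !mxE /=; ring. Qed.

Lemma symplectic_mul_tr (R : comPzRingType) : symplectic_mx R *m (symplectic_mx R)^T = 1.
Proof. by apply: matrix22P; rewrite !mxE !big_ord_recr big_ord0 /= !mxE /=; ring. Qed.

Lemma pairing_symplectic (R : comPzRingType) (N : 'M[R]_2) :
  pairing (symplectic_mx R) N = N 0 1 - N 1 0.
Proof. by rewrite pairingC pairingB !pairing_delta. Qed.

Section Slices.
Variable C : numClosedFieldType.
Implicit Types (psi phi : state C).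

Definition slice psi (a : 'I_3) : 'M[C]_2 := \matrix_(j, k) psi (a, j, k).

Lemma slice_inj psi phi : slice psi =1 slice phi -> psi = phi.
Proof.
by move=> eq_sl; apply/ffunP => -[[a j] k]; have /matrixP/(_ j k) := eq_sl a; rewrite !mxE.
Qed.

Lemma slice_apply_local (L1 : 'M[C]_3) (L2 L3 : 'M[C]_2) psi i :
  slice (apply_local L1 L2 L3 psi) i = \sum_a L1 i a *: (L2 *m slice psi a *m L3^T).
Proof.
apply/matrixP => j k; rewrite !mxE ffunE summxE; apply: eq_bigr => a _.
rewrite !mxE big_distrr /=.
under [RHS]eq_bigr do rewrite !mxE big_distrl big_distrr.
rewrite [RHS]exchange_big; apply: eq_bigr => b _; apply: eq_bigr => c _.
by rewrite !mxE /=; ring.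
Qed.

Lemma apply_local_comp (A1 B1 : 'M[C]_3) (A2 A3 B2 B3 : 'M[C]_2) phi :
  apply_local A1 A2 A3 (apply_local B1 B2 B3 phi) =
  apply_local (A1 *m B1) (A2 *m B2) (A3 *m B3) phi.
Proof.
apply: slice_inj => i; rewrite !slice_apply_local.
under eq_bigr do rewrite slice_apply_local mulmx_sumr mulmx_suml scaler_sumr.
rewrite exchange_big; apply: eq_bigr => b _.
rewrite mxE scaler_suml; apply: eq_bigr => a _.
by rewrite -scalemxAr -scalemxAl scalerA trmx_mul !mulmxA.
Qed.

Lemma slocc_le_trans psi chi phi : slocc_le psi chi -> slocc_le chi phi -> slocc_le psi phi.
Proof.
move=> [A1 [A2 [A3 <-]]] [B1 [B2 [B3 <-]]].
by exists (A1 *m B1), (A2 *m B2), (A3 *m B3); rewrite apply_local_comp.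
Qed.

Lemma slice_Phi1 : [/\ slice (Phi1 C) 0 = delta_mx 0 0, slice (Phi1 C) 1 = delta_mx 0 1
  & slice (Phi1 C) 2 = delta_mx 1 1].
Proof.
by split; apply/matrixP => -[[|[|//]] ?] [[|[|//]] ?];
  rewrite !mxE !ffunE !xpair_eqE -!val_eqE /= !inordK // ?addr0 ?add0r.
Qed.

Lemma slice_Phi2 : [/\ slice (Phi2 C) 0 = delta_mx 0 0,
  slice (Phi2 C) 1 = delta_mx 0 1 + delta_mx 1 0 & slice (Phi2 C) 2 = delta_mx 1 1].
Proof.
by split; apply/matrixP => -[[|[|//]] ?] [[|[|//]] ?];
  rewrite !mxE !ffunE !xpair_eqE -!val_eqE /= !inordK // ?addr0 ?add0r.
Qed.

Lemma slice_pencil (L1 : 'M[C]_3) (L2 L3 : 'M[C]_2) psi (t : 'I_3 -> C) :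
  \sum_i t i *: slice (apply_local L1 L2 L3 psi) i =
  L2 *m (\sum_a (\sum_i t i * L1 i a) *: slice psi a) *m L3^T.
Proof.
rewrite mulmx_sumr mulmx_suml.
under eq_bigr do rewrite slice_apply_local scaler_sumr.
rewrite exchange_big; apply: eq_bigr => a _.
by rewrite -scalemxAr -scalemxAl scaler_suml; apply: eq_bigr => i _; rewrite scalerA.
Qed.

Lemma apply_local_units (L1 : 'M[C]_3) (L2 L3 : 'M[C]_2) psi (t : 'I_3 -> C) :
  \det (\sum_i t i *: slice (apply_local L1 L2 L3 psi) i) != 0 ->
  (L2 \in unitmx) && (L3 \in unitmx).
Proof.
rewrite slice_pencil !det_mulmx det_tr !mulf_eq0 !negb_or -andbA => /and3P[d2 _ d3].
by rewrite !unitmxE !unitfE d2 d3.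
Qed.

(* Both Phi1 and Phi2 have slices 0 and 2 summing to the identity. *)
Lemma apply_local_units_of_identity (L1 : 'M[C]_3) (L2 L3 : 'M[C]_2) phi :
  slice (apply_local L1 L2 L3 phi) 0 + slice (apply_local L1 L2 L3 phi) 2 = 1 ->
  (L2 \in unitmx) && (L3 \in unitmx).
Proof.
move=> id_sum; apply: (@apply_local_units L1 L2 L3 phi (fun a => (a != 1)%:R)).
by rewrite sum_ord3 -!val_eqE /= scale0r addr0 !scale1r id_sum det1 oner_neq0.
Qed.

End Slices.

Section Annihilators.
Variable C : numClosedFieldType.
Implicit Types (psi phi : state C) (W : 'M[C]_2).

Definition annihilates W psi : Prop := forall a, pairing W (slice psi a) = 0.

Lemma annihilates_intro W psi : pairing W (slice psi 0) = 0 ->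
  pairing W (slice psi 1) = 0 -> pairing W (slice psi 2) = 0 -> annihilates W psi.
Proof.
move=> h0 h1 h2 a.
have ord3 : a = 0 \/ a = 1 \/ a = 2.
  by case: a => [[|[|[|//]]] ?]; [left|right; left|right; right]; apply: val_inj.
by case: ord3 => [->|[->|->]].
Qed.

(* Three slices cannot span the 4-dimensional space of 2x2 matrices. *)
Lemma exists_annihilator psi : exists2 W, W != 0 & annihilates W psi.
Proof.
pose S : 'M[C]_(3, 2 * 2) := \matrix_(a, k) mxvec (slice psi a) 0 k.
have : kermx S^T != 0.
  by rewrite kermx_eq0 /row_free; apply: contraTneq (rank_leq_col S^T) => ->.
case/rowV0Pn => v /sub_kermxP vS v0; exists (vec_mx v); first by rewrite vec_mx_eq0.
move=> a; rewrite pairing_mxvec vec_mxK.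
transitivity ((v *m S^T) 0 a); last by rewrite vS mxE.
by rewrite mxE; apply: eq_bigr => k _; rewrite !mxE.
Qed.

Definition cotransport (L2 L3 W : 'M[C]_2) : 'M[C]_2 := (invmx L2)^T *m W *m invmx L3.

Lemma cotransportK (L2 L3 W : 'M[C]_2) : L2 \in unitmx -> L3 \in unitmx ->
  L2^T *m cotransport L2 L3 W *m L3 = W.
Proof.
move=> u2 u3; rewrite /cotransport !mulmxA -trmx_mul mulVmx // trmx1 mul1mx.
by rewrite -mulmxA mulVmx // mulmx1.
Qed.

Lemma annihilates_apply_local (L1 : 'M[C]_3) (L2 L3 : 'M[C]_2) W phi :
  L2 \in unitmx -> L3 \in unitmx -> annihilates W phi ->
  annihilates (cotransport L2 L3 W) (apply_local L1 L2 L3 phi).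
Proof.
move=> u2 u3 annW i; rewrite slice_apply_local pairing_sum big1 // => a _.
by rewrite pairing_mulmx trmxK cotransportK // annW mulr0.
Qed.

(* The annihilators of Phi1 are the multiples of E10, those of Phi2 the
   multiples of J. *)
Lemma annihilates_Phi1 W : annihilates W (Phi1 C) -> \det W = 0.
Proof.
have [s0 s1 s2] := slice_Phi1 C.
move=> annW; have := annW 0; have := annW 1; have := annW 2.
rewrite s0 s1 s2 !pairing_delta det_mx22 => -> -> ->.
by rewrite !mul0r subrr.
Qed.

Lemma annihilates_Phi2 W : annihilates W (Phi2 C) -> \det W = 0 -> W = 0.
Proof.
have [s0 s1 s2] := slice_Phi2 C.
move=> annW; have := annW 0; have := annW 1; have := annW 2.
rewrite s0 s1 s2 pairingD !pairing_delta det_mx22 => W11 /eqP; rewrite addr_eq0 => /eqP W01 W00.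
rewrite W00 W11 W01 mul0r sub0r mulNr opprK => /eqP; rewrite mulf_eq0 orbb => /eqP W10.
by rewrite W10 oppr0 in W01; apply: matrix22P; rewrite mxE.
Qed.

Lemma delta10_annihilates_Phi1 : annihilates (delta_mx 1 0) (Phi1 C).
Proof.
have [s0 s1 s2] := slice_Phi1 C.
by apply: annihilates_intro; rewrite ?s0 ?s1 ?s2 pairing_delta mxE -!val_eqE.
Qed.

Lemma symplectic_annihilates_Phi2 : annihilates (symplectic_mx C) (Phi2 C).
Proof.
have [s0 s1 s2] := slice_Phi2 C.
by apply: annihilates_intro;
  rewrite ?s0 ?s1 ?s2 pairing_symplectic !mxE /= ?addr0 ?add0r ?subr0 ?subrr ?oppr0.
Qed.

End Annihilators.

Section Incomparability.
Variable C : numClosedFieldType.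

Lemma Phi1_not_le_Phi2 : ~ slocc_le (Phi1 C) (Phi2 C).
Proof.
case=> L1 [L2 [L3 eqPhi]]; have [s0 _ s2] := slice_Phi1 C.
have /andP[u2 u3] : (L2 \in unitmx) && (L3 \in unitmx).
  by apply: (@apply_local_units_of_identity _ L1 L2 L3 (Phi2 C)); rewrite eqPhi s0 s2 delta_diag_sum.
have := annihilates_apply_local L1 u2 u3 (symplectic_annihilates_Phi2 C).
rewrite eqPhi => /annihilates_Phi1/eqP; apply/negP.
rewrite /cotransport !det_mulmx det_tr !det_inv det_symplectic mulr1.
by rewrite mulf_neq0 // invr_eq0 -unitfE -unitmxE.
Qed.

Lemma Phi2_not_le_Phi1 : ~ slocc_le (Phi2 C) (Phi1 C).
Proof.
case=> L1 [L2 [L3 eqPhi]]; have [s0 _ s2] := slice_Phi2 C.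
have /andP[u2 u3] : (L2 \in unitmx) && (L3 \in unitmx).
  by apply: (@apply_local_units_of_identity _ L1 L2 L3 (Phi1 C)); rewrite eqPhi s0 s2 delta_diag_sum.
have := annihilates_apply_local L1 u2 u3 (delta10_annihilates_Phi1 C).
rewrite eqPhi => /annihilates_Phi2 cotransport0.
have /cotransport0 : \det (cotransport L2 L3 (delta_mx 1 0)) = 0.
  rewrite /cotransport !det_mulmx (det_mx22 (delta_mx _ _)) !mxE -!val_eqE /=.
  by rewrite !mul0r subrr mulr0 mul0r.
move/(congr1 (fun W => L2^T *m W *m L3)); rewrite cotransportK // mulmx0 mul0mx.
by move/matrixP/(_ 1 0); rewrite !mxE !eqxx => /eqP; rewrite oner_eq0.
Qed.

End Incomparability.

Section Universality.
Variable C : numClosedFieldType.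
Implicit Types (psi phi : state C) (A B W : 'M[C]_2).

Lemma slocc_le_of_normal_form psi phi A B (c : 'I_3 -> 'I_3 -> C) :
  A \in unitmx -> B \in unitmx ->
  (forall i, A *m slice psi i *m B = \sum_a c i a *: slice phi a) -> slocc_le psi phi.
Proof.
move=> uA uB normal; exists (\matrix_(i, a) c i a), (invmx A), (invmx B)^T.
apply: slice_inj => i; rewrite slice_apply_local trmxK.
have -> : slice psi i = invmx A *m (A *m slice psi i *m B) *m invmx B.
  by rewrite !mulmxA mulVmx // mul1mx mulmxK.
rewrite normal mulmx_sumr mulmx_suml; apply: eq_bigr => a _.
by rewrite mxE -scalemxAr -scalemxAl.
Qed.

Lemma le_Phi1_of_triangular psi A B :
  A \in unitmx -> B \in unitmx -> (forall i, (A *m slice psi i *m B) 1 0 = 0) ->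
  slocc_le psi (Phi1 C).
Proof.
move=> uA uB lower0; have [s0 s1 s2] := slice_Phi1 C.
pose N i := A *m slice psi i *m B.
apply: (slocc_le_of_normal_form (c := fun i a => [:: N i 0 0; N i 0 1; N i 1 1]`_a) uA uB).
by move=> i; rewrite sum_ord3 /= s0 s1 s2; apply: triangular_decomposition (lower0 i).
Qed.

Lemma le_Phi2_of_symmetric psi A B :
  A \in unitmx -> B \in unitmx ->
  (forall i, (A *m slice psi i *m B) 0 1 = (A *m slice psi i *m B) 1 0) ->
  slocc_le psi (Phi2 C).
Proof.
move=> uA uB sym; have [s0 s1 s2] := slice_Phi2 C.
pose N i := A *m slice psi i *m B.
apply: (slocc_le_of_normal_form (c := fun i a => [:: N i 0 0; N i 0 1; N i 1 1]`_a) uA uB).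
by move=> i; rewrite sum_ord3 /= s0 s1 s2; apply: symmetric_decomposition (sym i).
Qed.

Lemma le_Phi1_or_Phi2 psi : slocc_le psi (Phi1 C) \/ slocc_le psi (Phi2 C).
Proof.
have [W W0 annW] := exists_annihilator psi.
have [detW|detW] := eqVneq (\det W) 0.
- left; have [A [B [uA uB defW]]] := rank_one_factorization W0 detW.
  apply: (le_Phi1_of_triangular uA uB) => i.
  by rewrite -pairing_delta pairingC pairing_mulmx -defW annW.
- right; pose B := W^T *m symplectic_mx C.
  have uB : B \in unitmx.
    by rewrite unitmx_mul unitmx_tr !unitmxE det_symplectic unitfE detW unitr1.
  apply: (le_Phi2_of_symmetric (unitmx1 _ _) uB) => i.
  apply/eqP; rewrite -subr_eq0 -pairing_symplectic pairing_mulmx trmx1 mul1mx.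
  by rewrite trmx_mul trmxK mulmxA symplectic_mul_tr mul1mx annW.
Qed.

End Universality.

Lemma slocc_maximal_of_cover (C : numClosedFieldType) (a b : state C) :
  (forall psi, slocc_le psi a \/ slocc_le psi b) -> ~ slocc_le a b -> slocc_maximal a.
Proof.
move=> cover a_not_le_b psi a_le_psi.
by case: (cover psi) => // psi_le_b; case: a_not_le_b; apply: slocc_le_trans a_le_psi psi_le_b.
Qed.

Theorem mainTheorem7 (C : numClosedFieldType) :
  [/\ slocc_maximal (Phi1 C),
      slocc_maximal (Phi2 C),
      ~ slocc_equiv (Phi1 C) (Phi2 C)
    & forall phi : state C, slocc_maximal phi ->
        slocc_equiv phi (Phi1 C) \/ slocc_equiv phi (Phi2 C)].
Proof.
have cover (psi : state C) := le_Phi1_or_Phi2 psi.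
split.
- exact: slocc_maximal_of_cover cover (@Phi1_not_le_Phi2 C).
- apply: slocc_maximal_of_cover (@Phi2_not_le_Phi1 C) => psi.
  by case: (cover psi); [right | left].
- by case=> /(@Phi1_not_le_Phi2 C).
- move=> phi max_phi; case: (cover phi) => le_phi; [left | right].
  all: by split; [exact: le_phi | exact: max_phi].
Qed.
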